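(* For every integer $p\ge 3$, the cycle $C_p$ on $p$ vertices satisfies $$\gamma_{[3R]}(C_p)=\begin{cases}\left\lceil \frac{4p}{3}\right\rceil & \text{if } p\in\{4,5,7,10\} \text{ or } p\equiv 0\pmod 3,\\[0.5em] \left\lceil \frac{4p}{3}\right\rceil+1 & \text{if } p\notin\{4,5,7,10\} \text{ and } p\equiv 1,2\pmod 3.\end{cases}$$
   Context: For a graph $\Gamma=(V,E)$ and $h:V\to\{0,1,2,3,4\}$, let $AN(v)=\{w\in N(v):h(w)\ge 1\}$, $AN[v]=AN(v)\cup\{v\}$ and $h(S)=\sum_{u\in S}h(u)$. $h$ is a triple Roman dominating function (3RDF) if every $v$ with $h(v)<3$ satisfies $h(AN[v])\ge|AN(v)|+3$. The triple Roman domination number $\gamma_{[3R]}(\Gamma)$ is the minimum weight $h(V)$ of a 3RDF of $\Gamma$. *)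

From mathcomp Require Import all_boot.
Set Implicit Arguments. Unset Strict Implicit. Unset Printing Implicit Defensive.

(* A graph is a (symmetric, irreflexive) relation e on a finite vertex type T.
   Labels h : T -> {0,..,4} are finite functions into 'I_5. *)
Section TRD.
Variables (T : finType) (e : rel T).

Definition active_nbrs (h : {ffun T -> 'I_5}) (v : T) : {set T} :=
  [set w | e v w & 0 < h w].

Definition hAN (h : {ffun T -> 'I_5}) (v : T) : nat :=
  h v + \sum_(w in active_nbrs h v) (h w : nat).

Definition is3RDF (h : {ffun T -> 'I_5}) : bool :=
  [forall v, (h v < 3) ==> (#|active_nbrs h v| + 3 <= hAN h v)].

Definition weight (h : {ffun T -> 'I_5}) : nat := \sum_(v : T) (h v : nat).

(* minimum weight of a 3RDF; the constant 4 * #|T| is the weight of the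
   constant-4 function, which is always a 3RDF, so this is the true minimum *)
Definition gamma3R : nat :=
  \big[minn/4 * #|T|]_(h : {ffun T -> 'I_5} | is3RDF h) weight h.
End TRD.

Definition cycle_rel (p : nat) : rel 'I_p :=
  fun i j => (j == (i.+1 %% p) :> nat) || (i == (j.+1 %% p) :> nat).

Definition ceil4p3 (p : nat) : nat := (4 * p + 2) %/ 3.
Arguments cycle_rel p : clear implicits.

(* The condition of a triple Roman dominating function at a vertex of C_p only
   involves the labels of the vertex and of its two neighbours, so 3RDFs of C_p
   are cyclic words over {0,...,4} all of whose windows (a, b, c) satisfy
   b >= 3 or a + b + c >= 3 + [a > 0] + [c > 0].

   Upper bound: the words (040)^k, (040)^k 3 and (040)^k 22 are valid, as are
   0303, 02203, 0220303 and 0220302203.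

   Lower bound: the minimal weight of a valid word is a closed walk problem in the
   min-plus algebra, with states the pairs of consecutive labels.  The walk
   tables W_n satisfy W_(n+3) = W_n + 4 for n >= 20, as does the claimed value of
   the domination number for n > 10, so only finitely many lengths need to be
   checked, and this is done by computation. *)

From mathcomp Require Import all_boot all_order zify.
Import Order.TTheory.
Set Implicit Arguments. Unset Strict Implicit. Unset Printing Implicit Defensive.

Section Gamma3R.
Variables (T : finType) (e : rel T).

Lemma gamma3R_le h : is3RDF e h -> gamma3R e <= weight h.
Proof. exact: (@bigmin_le_cond _ nat). Qed.

Lemma gamma3R_ge m : (forall h, is3RDF e h -> m <= weight h) -> m <= gamma3R e.
Proof.
move=> lb; apply/(@bigmin_geP _ nat); split=> //.
have top3RDF : is3RDF e [ffun=> ord_max] by apply/forallP => v; rewrite ffunE.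
have := lb _ top3RDF; rewrite /weight (eq_bigr (fun=> 4)) => [|v _]; last by rewrite ffunE.
by rewrite sum_nat_const mulnC.
Qed.

Variables (h : {ffun T -> 'I_5}) (v : T).

Lemma sum_active_nbrs (F : T -> nat) :
  \sum_(w in active_nbrs e h v) F w = \sum_(w | e v w) (0 < h w) * F w.
Proof.
rewrite big_mkcond [RHS]big_mkcond; apply: eq_bigr => w _.
by rewrite /active_nbrs inE; case: (e v w); case: (0 < h w); rewrite ?mul1n ?mul0n.
Qed.

Lemma card_active_nbrs : #|active_nbrs e h v| = \sum_(w | e v w) (0 < h w).
Proof. by rewrite -sum1_card sum_active_nbrs; apply: eq_bigr => w _; rewrite muln1. Qed.

Lemma hAN_nbrs : hAN e h v = h v + \sum_(w | e v w) h w.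
Proof.
rewrite /hAN sum_active_nbrs; congr (_ + _); apply: eq_bigr => w _.
by case: (nat_of_ord (h w)) => [|n]; rewrite ?mul1n.
Qed.

End Gamma3R.

Definition local3RDF (a b c : nat) : bool :=
  (3 <= b) || ((0 < a) + (0 < c) + 3 <= a + b + c).

Section Cycle.
Variables (p : nat) (p_gt2 : 2 < p).

Lemma cycle_relE (v w : 'I_p) : cycle_rel p v w = (w == ord_pred v) || (w == ordS v).
Proof.
rewrite /cycle_rel orbC; congr (_ || _).
by rewrite -(can2_eq (@ordSK p) (@ord_predK p)) eq_sym.
Qed.

Lemma ordS_neq_ord_pred (v : 'I_p) : ord_pred v != ordS v.
Proof.
apply/eqP => /(congr1 (@ordS p)); rewrite ord_predK => /(congr1 val) /=.
have := ltn_ord v; rewrite leq_eqVlt => /predU1P [v1p | v1p].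
  by rewrite v1p modnn modn_small //; lia.
rewrite (modn_small v1p); move: v1p; rewrite leq_eqVlt => /predU1P [v2p | v2p].
  by rewrite v2p modnn; lia.
by rewrite modn_small //; lia.
Qed.

Lemma sum_cycle_nbrs (F : 'I_p -> nat) (v : 'I_p) :
  \sum_(w | cycle_rel p v w) F w = F (ord_pred v) + F (ordS v).
Proof.
under eq_bigl => w do rewrite cycle_relE.
rewrite (bigD1 (ord_pred v)) ?eqxx //= (big_pred1 (ordS v)) // => w /=.
rewrite andb_orl andbN /=; case: (w =P ordS v) => [->|//].
by rewrite eq_sym ordS_neq_ord_pred.
Qed.

Lemma is3RDF_cycle h :
  is3RDF (cycle_rel p) h = [forall v, local3RDF (h (ord_pred v)) (h v) (h (ordS v))].
Proof.
apply: eq_forallb => v.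
rewrite hAN_nbrs card_active_nbrs !sum_cycle_nbrs /local3RDF implybE -leqNgt.
by rewrite addnCA addnA.
Qed.

End Cycle.

Fixpoint path3RDF (t : seq nat) : bool :=
  if t is a :: ((b :: c :: _) as t') then local3RDF a b c && path3RDF t' else true.

Definition cycle3RDF (s : seq nat) : bool := path3RDF (last 0 s :: rcons s (head 0 s)).

Lemma path3RDFP t :
  reflect (forall i, i.+2 < size t -> local3RDF (nth 0 t i) (nth 0 t i.+1) (nth 0 t i.+2))
          (path3RDF t).
Proof.
elim: t => [|a [|b [|c t]] IH] /=; try by constructor; case.
apply: (iffP andP) => [[abc /IH tP] [|i] // /tP // | tP].
by split; [exact: (tP 0) | apply/IH => i /(tP i.+1)].
Qed.

Lemma cycle3RDFP s :
  reflect (forall i, i < size s -> local3RDF (nth 0 s ((i + size s).-1 %% size s))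
                                             (nth 0 s i) (nth 0 s (i.+1 %% size s)))
          (cycle3RDF s).
Proof.
set t := last 0 s :: rcons s (head 0 s); set n := size s.
have t_pred i : i < n -> nth 0 t i = nth 0 s ((i + n).-1 %% n).
  case: i => [n_gt0 | i lt_in] /=.
    by rewrite add0n modn_small ?prednK // nth_last.
  by rewrite modnDr modn_small 1?ltnW // nth_rcons (ltnW lt_in).
have t_cur i : i < n -> nth 0 t i.+1 = nth 0 s i by move=> lt_in; rewrite /= nth_rcons lt_in.
have t_succ i : i < n -> nth 0 t i.+2 = nth 0 s (i.+1 %% n).
  move=> lt_in /=; rewrite nth_rcons -/n.
  case: (ltngtP i.+1 n) => [lt_i1n | lt_ni1 | <-]; first by rewrite modn_small.
    by move: lt_in; rewrite ltnNge -ltnS lt_ni1.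
  by rewrite modnn; case: (s).
have size_t : size t = n.+2 by rewrite /= size_rcons.
apply: (iffP (path3RDFP t)); rewrite size_t => okP i lt_in.
  by rewrite -(t_pred i) // -(t_cur i) // -(t_succ i) //; apply: okP.
by rewrite (t_pred i) // (t_cur i) // (t_succ i) //; apply: okP.
Qed.

Definition cycle_word p (h : {ffun 'I_p -> 'I_5}) : seq nat :=
  [seq (h v : nat) | v <- enum 'I_p].

Section CycleWord.
Variables (p : nat) (h : {ffun 'I_p -> 'I_5}).

Lemma size_cycle_word : size (cycle_word h) = p.
Proof. by rewrite size_map size_enum_ord. Qed.

Lemma nth_cycle_word (v : 'I_p) : nth 0 (cycle_word h) v = h v.
Proof. by rewrite (nth_map v) ?nth_ord_enum // size_enum_ord. Qed.

Lemma weight_cycle_word : weight h = sumn (cycle_word h).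
Proof. by rewrite sumnE big_map big_enum. Qed.

Lemma cycle_word_labels : all (fun x => x < 5) (cycle_word h).
Proof. by apply/allP => _ /mapP [v _ ->]. Qed.

Lemma is3RDF_cycle_word : 2 < p -> is3RDF (cycle_rel p) h = cycle3RDF (cycle_word h).
Proof.
move=> p_gt2; rewrite is3RDF_cycle //; apply/forallP/cycle3RDFP; rewrite size_cycle_word.
  by move=> ok_h i lt_ip; have := ok_h (Ordinal lt_ip); rewrite -!nth_cycle_word.
by move=> ok_w v; rewrite -!nth_cycle_word; apply: ok_w.
Qed.

End CycleWord.

Lemma gamma3R_cycle_word_le s : 2 < size s -> all (fun x => x < 5) s -> cycle3RDF s ->
  gamma3R (cycle_rel (size s)) <= sumn s.
Proof.
move=> s_gt2 s_lt5 ok_s.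
pose h : {ffun 'I_(size s) -> 'I_5} := [ffun v : 'I_(size s) => inord (nth 0 s v)].
have word_h : cycle_word h = s.
  apply: (@eq_from_nth _ 0); rewrite ?size_cycle_word // => i lt_is.
  rewrite (nth_cycle_word h (Ordinal lt_is)) ffunE inordK //.
  by move/all_nthP: s_lt5; apply.
have -> : sumn s = weight h by rewrite weight_cycle_word word_h.
by apply: gamma3R_le; rewrite is3RDF_cycle_word // word_h.
Qed.

Definition gamma3R_cycle (p : nat) : nat :=
  if (p \in [:: 4; 5; 7; 10]) || (p %% 3 == 0) then ceil4p3 p else (ceil4p3 p).+1.

Lemma gamma3R_cycle_add3 p : 10 < p -> gamma3R_cycle (p + 3) = gamma3R_cycle p + 4.
Proof.
move=> p_gt10; rewrite /gamma3R_cycle modnDr !inE.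
have ceil_add3 : ceil4p3 (p + 3) = ceil4p3 p + 4 by rewrite /ceil4p3; lia.
rewrite ceil_add3 ![(p + 3 == _)]eqn_leq ![(p == _)]eqn_leq.
by case: ifP; case: ifP => //; lia.
Qed.

Definition labels : seq nat := iota 0 5.

Definition states : seq (nat * nat) := [seq (a, b) | a <- labels, b <- labels].

Lemma mem_states s : (s \in states) = (s.1 < 5) && (s.2 < 5).
Proof.
case: s => a b; apply/allpairsP/andP => [[[x y] [x5 y5 [-> ->]]] | [a5 b5]].
  by move: x5 y5; rewrite !mem_iota => /= -> ->.
by exists (a, b); rewrite !mem_iota.
Qed.

Definition table := seq (seq (option nat)).

Definition entry (T : table) (s s' : nat * nat) : option nat :=
  nth None (nth [::] T (index s states)) (index s' states).

Definition tabulate (f : nat * nat -> nat * nat -> option nat) : table :=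
  [seq [seq f s s' | s' <- states] | s <- states].

Lemma entry_tabulate f s s' : s \in states -> s' \in states ->
  entry (tabulate f) s s' = f s s'.
Proof.
move=> s_st s'_st.
by rewrite /entry (nth_map s) ?index_mem // nth_index // (nth_map s') ?index_mem // nth_index.
Qed.

Definition omin (x y : option nat) : option nat :=
  match x, y with
  | Some m, Some n => Some (minn m n)
  | None, _ => y
  | _, None => x
  end.

Lemma foldr_omin_le (l : seq (option nat)) w :
  Some w \in l -> exists2 m, foldr omin None l = Some m & m <= w.
Proof.
elim: l => [|x l IH] //; rewrite inE => /predU1P [<- | /IH [m fold_m le_mw]] /=.
  by case: (foldr omin None l) => [m|]; [exists (minn w m); rewrite ?geq_minl | exists w].
by rewrite fold_m; case: x => [n|]; [exists (minn n m); rewrite ?geq_min ?le_mw ?orbT | exists m].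
Qed.

Lemma foldr_omin_add k (l : seq (option nat)) :
  foldr omin None (map (omap (addn k)) l) = omap (addn k) (foldr omin None l).
Proof.
elim: l => [|x l /= ->] //.
by case: x => [m|] //; case: (foldr _ _ _) => [n|] //=; rewrite addn_minr.
Qed.

Definition next_state (s : nat * nat) (x : nat) : nat * nat := (s.2, x).

Lemma foldl_next_state_snd s u : (foldl next_state s u).2 = last s.2 u.
Proof. by elim: u s => [|x u IH] s //=; rewrite IH. Qed.

Definition extend (T : table) (s s' : nat * nat) : option nat :=
  foldr omin None [seq if local3RDF s.1 s.2 x then omap (addn x) (entry T (next_state s x) s')
                       else None | x <- labels].

Definition walk_step (T : table) : table := tabulate (extend T).

(* [entry (walk_table n) (a, b) s'] is the least value of x_1 + ... + x_n over the words
   a b x_1 ... x_n ending in state s' all of whose n interior letters satisfy local3RDF,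
   or None if there is no such word; only the bound walk_table_sound is used. *)
Definition walk_table (n : nat) : table :=
  iter n walk_step (tabulate (fun s s' => if s == s' then Some 0 else None)).

Lemma entry_walk_tableS n s s' : s \in states -> s' \in states ->
  entry (walk_table n.+1) s s' = extend (walk_table n) s s'.
Proof. exact: entry_tabulate. Qed.

Lemma foldl_next_state_mem s u :
  s \in states -> all (fun x => x < 5) u -> foldl next_state s u \in states.
Proof.
elim: u s => [|x u IH] s //= s_st /andP [x5 u5]; apply: IH => //.
by rewrite mem_states x5 andbT; move: s_st; rewrite mem_states => /andP [].
Qed.

Lemma walk_table_sound a b u :
  all (fun x => x < 5) [:: a, b & u] -> path3RDF [:: a, b & u] ->
  exists2 m, entry (walk_table (size u)) (a, b) (foldl next_state (a, b) u) = Some m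
           & m <= sumn u.
Proof.
elim: u a b => [|x u IH] a b /=.
  by move=> /and3P [a5 b5 _] _; exists 0; rewrite // entry_tabulate ?eqxx // mem_states /= a5.
move=> /and4P [a5 b5 x5 u5] /andP [ok_abx ok_u].
have [|m walk_m le_m] := IH b x _ ok_u; first by rewrite /= b5 x5.
rewrite entry_walk_tableS ?foldl_next_state_mem ?mem_states ?a5 ?b5 ?x5 //.
have [m' -> le_m'] : exists2 m', extend (walk_table (size u)) (a, b) (foldl next_state (b, x) u)
                                   = Some m' & m' <= x + m.
  apply: foldr_omin_le; apply/mapP; exists x; first by rewrite mem_iota.
  by rewrite /= ok_abx /next_state /= walk_m.
by exists m'; last by apply: leq_trans le_m' _; rewrite leq_add2l.
Qed.

Lemma walk_table_period_check :
  let T := walk_table 20 in let T' := walk_table 23 in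
  all (fun s => all (fun s' => entry T' s s' == omap (addn 4) (entry T s s')) states) states.
Proof. by vm_compute. Qed.

Lemma extend_add k T T' s s' : s \in states ->
  (forall t, t \in states -> entry T' t s' = omap (addn k) (entry T t s')) ->
  extend T' s s' = omap (addn k) (extend T s s').
Proof.
move=> s_st TT'; rewrite /extend -foldr_omin_add -map_comp; congr foldr; apply/eq_in_map => x.
rewrite mem_iota /= => x5; case: (local3RDF _ _ _) => //.
rewrite TT'; last by move: s_st; rewrite !mem_states /= x5 andbT => /andP [].
by case: (entry T _ _) => //= n; rewrite addnCA.
Qed.

Lemma walk_table_periodic n s s' : 20 <= n -> s \in states -> s' \in states ->
  entry (walk_table (n + 3)) s s' = omap (addn 4) (entry (walk_table n) s s').
Proof.
move=> /subnK <-; elim: (n - 20) s => [|k IH] s s_st s'_st.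
  by have /allP/(_ s s_st)/allP/(_ s' s'_st)/eqP := walk_table_period_check.
by rewrite !addSn !entry_walk_tableS //; apply: extend_add => // t t_st; apply: IH.
Qed.

Lemma walk_table_small_check :
  let W := traject walk_step (walk_table 0) 23 in
  all (fun p => let T := nth (walk_table 0) W p in
                all (fun s => oapp (leq (gamma3R_cycle p)) true (entry T s s)) states)
      (iota 3 20).
Proof. by vm_compute. Qed.

Lemma closed_walk_ge p s m : 2 < p -> s \in states ->
  entry (walk_table p) s s = Some m -> gamma3R_cycle p <= m.
Proof.
elim/ltn_ind: p m => p IH m p_gt2 s_st.
case: (ltnP p 23) => [p_lt23 | p_ge23].
  have /allP/(_ p) := walk_table_small_check; rewrite mem_iota p_gt2 addnC p_lt23.
  by move=> /(_ isT)/allP/(_ s s_st); rewrite nth_traject // => + walk_m; rewrite walk_m.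
have -> : p = (p - 3) + 3 by lia.
rewrite walk_table_periodic //; last by lia.
case walk_m: entry => [m'|] //= [<-].
rewrite gamma3R_cycle_add3; last by lia.
by rewrite addnC leq_add2l (IH _ _ m') //; lia.
Qed.

Lemma cycle3RDF_sumn_ge s : 2 < size s -> all (fun x => x < 5) s -> cycle3RDF s ->
  gamma3R_cycle (size s) <= sumn s.
Proof.
case: s => [|x s] // s_gt2 s5 ok_s.
have last5 := allP s5 _ (mem_last x s); move: s5 => /= /andP [x5 s5].
have [|m walk_m le_m] := @walk_table_sound (last x s) x (rcons s x) _ ok_s.
  by rewrite /= all_rcons last5 x5 s5.
rewrite foldl_rcons /next_state foldl_next_state_snd size_rcons in walk_m.
apply: leq_trans (closed_walk_ge _ _ walk_m) _ => //; first by rewrite mem_states last5 x5.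
by rewrite sumn_rcons addnC in le_m.
Qed.

Lemma gamma3R_cycle_ge p : 2 < p -> gamma3R_cycle p <= gamma3R (cycle_rel p).
Proof.
move=> p_gt2; apply: gamma3R_ge => h; rewrite is3RDF_cycle_word // weight_cycle_word => ok_h.
have := cycle3RDF_sumn_ge _ (cycle_word_labels h) ok_h.
by rewrite size_cycle_word; apply.
Qed.

Lemma cycle3RDF_pump r :
  cycle3RDF ([:: 0; 4; 0] ++ r) -> cycle3RDF ([:: 0; 4; 0] ++ [:: 0; 4; 0] ++ r).
Proof. by rewrite /cycle3RDF /=. Qed.

Definition pumped (k : nat) (r : seq nat) : seq nat := iter k (cat [:: 0; 4; 0]) r.

Lemma gamma3R_pumped_le k r : all (fun x => x < 5) r -> cycle3RDF ([:: 0; 4; 0] ++ r) ->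
  gamma3R (cycle_rel (3 * k.+1 + size r)) <= 4 * k.+1 + sumn r.
Proof.
move=> r5 ok_r.
have [<- <- s5 ok_s] : [/\ size (pumped k.+1 r) = 3 * k.+1 + size r,
  sumn (pumped k.+1 r) = 4 * k.+1 + sumn r,
  all (fun x => x < 5) (pumped k.+1 r) & cycle3RDF (pumped k.+1 r)].
  elim: k => [|k [size_s sumn_s s5 ok_s]]; first by split=> //=; lia.
  rewrite /pumped iterS size_cat sumn_cat all_cat size_s sumn_s s5.
  by split; [rewrite /=; lia | rewrite /=; lia | | exact: cycle3RDF_pump].
by apply: gamma3R_cycle_word_le; rewrite // size_cat.
Qed.

Lemma gamma3R_cycle_le p : 2 < p -> gamma3R (cycle_rel p) <= gamma3R_cycle p.
Proof.
move=> p_gt2; rewrite /gamma3R_cycle.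
case: ifP => [/orP [|/eqP p0] | /norP [_ /eqP p0]].
- rewrite !inE => /or4P [] /eqP ->.
  + exact: (@gamma3R_cycle_word_le [:: 0; 3; 0; 3]).
  + exact: (@gamma3R_cycle_word_le [:: 0; 2; 2; 0; 3]).
  + exact: (@gamma3R_cycle_word_le [:: 0; 2; 2; 0; 3; 0; 3]).
  + exact: (@gamma3R_cycle_word_le [:: 0; 2; 2; 0; 3; 0; 2; 2; 0; 3]).
- have -> : p = 3 * (p %/ 3).-1.+1 + 0 by lia.
  apply: leq_trans (@gamma3R_pumped_le _ [::] isT isT) _; rewrite /ceil4p3 /=; lia.
- have [p1 | p2] : p %% 3 = 1 \/ p %% 3 = 2 by lia.
  + have -> : p = 3 * (p %/ 3).-1.+1 + 1 by lia.
    apply: leq_trans (@gamma3R_pumped_le _ [:: 3] isT isT) _; rewrite /ceil4p3 /=; lia.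
  + have -> : p = 3 * (p %/ 3).-1.+1 + 2 by lia.
    apply: leq_trans (@gamma3R_pumped_le _ [:: 2; 2] isT isT) _; rewrite /ceil4p3 /=; lia.
Qed.

Theorem proposition22 (p : nat) : 3 <= p ->
  gamma3R (cycle_rel p) =
    if (p \in [:: 4; 5; 7; 10]) || (p %% 3 == 0) then ceil4p3 p
    else (ceil4p3 p).+1.
Proof.
move=> p_gt2; rewrite -/(gamma3R_cycle p).
by apply/eqP; rewrite eqn_leq gamma3R_cycle_le // gamma3R_cycle_ge.
Qed.
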